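(* Let $d\ge3$, $n_1,\dots,n_d,k$ positive integers, $\mathfrak{L}$ an invertible linear transform as in the context, $\tau>0$, $0<p<1$ and $w=(w_{i,j})$ nonnegative weights. Let $\boldsymbol{\mathcal{A}}=\boldsymbol{\mathcal{Q}}*_{\mathfrak{L}}\boldsymbol{\mathcal{B}}\in\mathbb{R}^{n_1\times n_2\times n_3\times\cdots\times n_d}$, where $\boldsymbol{\mathcal{Q}}\in\mathbb{R}^{n_1\times k\times n_3\times\cdots\times n_d}$ is partially orthogonal and $\boldsymbol{\mathcal{B}}\in\mathbb{R}^{k\times n_2\times n_3\times\cdots\times n_d}$. Then $$\boldsymbol{\mathcal{D}}_{\boldsymbol{\mathcal{W}},p,\tau}(\boldsymbol{\mathcal{A}})=\boldsymbol{\mathcal{Q}}*_{\mathfrak{L}}\boldsymbol{\mathcal{D}}_{\boldsymbol{\mathcal{W}},p,\tau}(\boldsymbol{\mathcal{B}}).$$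
   Context: Transform: for $i=3,\dots,d$ let $\bm U_{n_i}\in\mathbb{C}^{n_i\times n_i}$ satisfy $\bm U_{n_i}\bm U_{n_i}^H=\bm U_{n_i}^H\bm U_{n_i}=\alpha_i\bm I_{n_i}$, $\alpha_i>0$. For a tensor $\boldsymbol{\mathcal{A}}$ of size $m_1\times m_2\times n_3\times\cdots\times n_d$, $\mathfrak{L}(\boldsymbol{\mathcal{A}})=\boldsymbol{\mathcal{A}}\times_3\bm U_{n_3}\cdots\times_d\bm U_{n_d}$ (mode-$k$ product $\boldsymbol{\mathcal{B}}=\boldsymbol{\mathcal{A}}\times_k\bm M$ iff $\bm B_{(k)}=\bm M\bm A_{(k)}$), with inverse $\mathfrak{L}^{-1}$. Frontal slices $\boldsymbol{\mathcal{A}}^{<j>}=\boldsymbol{\mathcal{A}}(:,:,i_3,\dots,i_d)$, $j=i_3+\sum_{a=4}^d(i_a-1)\prod_{b=3}^{a-1}n_b\in\{1,\dots,N\}$, $N=n_3\cdots n_d$. t-product: $\boldsymbol{\mathcal{C}}=\boldsymbol{\mathcal{A}}*_{\mathfrak{L}}\boldsymbol{\mathcal{B}}$ iff $\mathfrak{L}(\boldsymbol{\mathcal{C}})^{<j>}=\mathfrak{L}(\boldsymbol{\mathcal{A}})^{<j>}\mathfrak{L}(\boldsymbol{\mathcal{B}})^{<j>}$ for all $j$. Transpose: $\mathfrak{L}(\boldsymbol{\mathcal{A}}^T)^{<j>}=(\mathfrak{L}(\boldsymbol{\mathcal{A}})^{<j>})^H$. Identity tensor: $\mathfrak{L}(\boldsymbol{\mathcal{I}})^{<j>}=\bm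 I$ for all $j$. $\boldsymbol{\mathcal{Q}}$ is partially orthogonal if $\boldsymbol{\mathcal{Q}}^T*_{\mathfrak{L}}\boldsymbol{\mathcal{Q}}=\boldsymbol{\mathcal{I}}$, orthogonal if also $\boldsymbol{\mathcal{Q}}*_{\mathfrak{L}}\boldsymbol{\mathcal{Q}}^T=\boldsymbol{\mathcal{I}}$. f-diagonal: all frontal slices diagonal. T-SVD: $\boldsymbol{\mathcal{A}}=\boldsymbol{\mathcal{U}}*_{\mathfrak{L}}\boldsymbol{\mathcal{S}}*_{\mathfrak{L}}\boldsymbol{\mathcal{V}}^T$, $\boldsymbol{\mathcal{U}},\boldsymbol{\mathcal{V}}$ orthogonal, $\boldsymbol{\mathcal{S}}$ f-diagonal, obtained from slice-wise SVDs of $\mathfrak{L}(\boldsymbol{\mathcal{A}})^{<j>}$ with singular values in non-increasing order. GST: for $s\in\mathbb{R}$, $w\ge0$, $0<p<1$, $\delta=[2w(1-p)]^{\frac1{2-p}}+wp[2w(1-p)]^{\frac{p-1}{2-p}}$; $\mathrm{GST}(s,w,p)=0$ if $|s|\le\delta$, else $\mathrm{sign}(s)\hat\alpha^*$ with $\hat\alpha^*$ the largest positive root of $\alpha+wp\alpha^{p-1}=|s|$; $\mathrm{GST}(s,0,p)=s$. GTSVT: for a tensor $\boldsymbol{\mathcal{A}}$ of size $m_1\times m_2\times n_3\times\cdots\times n_d$ with T-SVD $\boldsymbol{\mathcal{U}}*_{\mathfrak{L}}\boldsymbol{\mathcal{S}}*_{\mathfrak{L}}\boldsymbol{\mathcal{V}}^T$,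 $\boldsymbol{\mathcal{D}}_{\boldsymbol{\mathcal{W}},p,\tau}(\boldsymbol{\mathcal{A}})=\boldsymbol{\mathcal{U}}*_{\mathfrak{L}}\mathfrak{L}^{-1}(\hat{\boldsymbol{\mathcal{S}}})*_{\mathfrak{L}}\boldsymbol{\mathcal{V}}^T$, where $\hat{\boldsymbol{\mathcal{S}}}$ is f-diagonal with $\hat{\boldsymbol{\mathcal{S}}}^{<j>}(i,i)=\mathrm{GST}\big(\mathfrak{L}(\boldsymbol{\mathcal{S}})^{<j>}(i,i),\tau w_{i,j},p\big)$ for $i\le\min(m_1,m_2)$; here $\boldsymbol{\mathcal{W}}$ denotes the f-diagonal weight tensor with $\boldsymbol{\mathcal{W}}^{<j>}(i,i)=w_{i,j}$, the same weights $w_{i,j}$ being used regardless of the first two dimensions of the argument. *)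

From HB Require Import structures.
From mathcomp Require Import all_boot all_order all_algebra.
From mathcomp Require Import complex.
From mathcomp Require Import boolp classical_sets reals exp.

Set Implicit Arguments.
Unset Strict Implicit.
Unset Printing Implicit Defensive.

Import Order.TTheory GRing.Theory Num.Theory.
Local Open Scope ring_scope.
Local Open Scope complex_scope.

Section GST.
Variable R : realType.

Definition gst_delta (w p : R) : R :=
  powR (2 * w * (1 - p)) (1 / (2 - p))
  + w * p * powR (2 * w * (1 - p)) ((p - 1) / (2 - p)).

Definition gst_root (t w p : R) : R :=
  xget 0 [set a : R | 0 < a /\ a + w * p * powR a (p - 1) = t /\
          (forall b : R, 0 < b -> b + w * p * powR b (p - 1) = t -> b <= a)].

Definition GST (s w p : R) : R :=
  if w == 0 then s
  else if `|s| <= gst_delta w p then 0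
  else Num.sg s * gst_root `|s| w p.
End GST.

(* A tensor of size m1 x m2 x n_3 x ... x n_d (ns = [:: n_3; ...; n_d]) *)
(* is represented by its family of frontal slices A^{<j>}, the         *)
(* (0-based) linear index j = (i_3-1) + sum_a (i_a-1) prod_{b<a} n_b  *)
(* ranging over 'I_N, N = n_3 * ... * n_d.                            *)
Section Tensor.
Variable R : realType.
Local Notation C := R[i].

Definition mxH m n (M : 'M[C]_(m, n)) : 'M[C]_(n, m) := (map_mx Num.conj M)^T.

(* entry (r, c) of a matrix, indexed by natural numbers (0 outside) *)
Definition mxe m n (M : 'M[C]_(m, n)) (r c : nat) : C :=
  match @insub nat (fun x => (x < m)%N) 'I_m r, @insub nat (fun x => (x < n)%N) 'I_n c with
  | Some r', Some c' => M r' c'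
  | _, _ => 0
  end.

Variable ns : seq nat.   (* [:: n_3; ...; n_d] *)

Definition dimN : nat := \prod_(a < size ns) nth 1 ns a.

Definition tensor (m1 m2 : nat) := 'I_dimN -> 'M[C]_(m1, m2).

Definition stride (a : nat) : nat := \prod_(b < a) nth 1 ns b.

(* (0-based) index i_{a+3} - 1 of the frontal slice with linear index j *)
Definition digit (j : nat) (a : nat) : nat := (j %/ stride a) %% nth 1 ns a.

Definition modeprod m1 m2 (a : 'I_(size ns)) (M : 'M[C]_(nth 1 ns a))
  (T : tensor m1 m2) : tensor m1 m2 :=
  fun j => \sum_(j' : 'I_dimN |
                [forall b : 'I_(size ns), (b != a) ==> (digit j' b == digit j b)])
             mxe M (digit j a) (digit j' a) *: T j'.

Variable Us : forall a : 'I_(size ns), 'M[C]_(nth 1 ns a).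

Definition Lt m1 m2 (T : tensor m1 m2) : tensor m1 m2 :=
  foldl (fun X a => modeprod (Us a) X) T (enum 'I_(size ns)).

Definition Linv m1 m2 (T : tensor m1 m2) : tensor m1 m2 :=
  foldl (fun X a => modeprod (invmx (Us a)) X) T (rev (enum 'I_(size ns))).

Definition tprod m1 m2 m3 (A : tensor m1 m2) (B : tensor m2 m3) : tensor m1 m3 :=
  Linv (fun j => Lt A j *m Lt B j).

Definition ttr m1 m2 (A : tensor m1 m2) : tensor m2 m1 :=
  Linv (fun j => mxH (Lt A j)).

Definition tid m : tensor m m := Linv (fun _ => 1%:M).

Definition part_orth m1 m2 (Q : tensor m1 m2) : Prop :=
  tprod (ttr Q) Q = tid m2.

Definition orth m (Q : tensor m m) : Prop :=
  part_orth Q /\ tprod Q (ttr Q) = tid m.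

Definition fdiag m1 m2 (S : tensor m1 m2) : Prop :=
  forall j (r : 'I_m1) (c : 'I_m2), (r : nat) != c -> S j r c = 0.

Definition real_tensor m1 m2 (A : tensor m1 m2) : Prop :=
  forall j r c, complex.Im (A j r c) = 0.

Definition tsvd m1 m2 (A : tensor m1 m2) (U : tensor m1 m1) (S : tensor m1 m2)
  (V : tensor m2 m2) : Prop :=
  orth U /\ orth V /\ fdiag S /\ fdiag (Lt S) /\
  A = tprod (tprod U S) (ttr V) /\
  (forall j i, (i < minn m1 m2)%N -> 0 <= mxe (Lt S j) i i) /\
  (forall j i i', (i <= i')%N -> (i' < minn m1 m2)%N ->
                   mxe (Lt S j) i' i' <= mxe (Lt S j) i i).

(* weights w_{i,j} (0-based i), independent of the first two dimensions *)
Definition Shat m1 m2 (W : nat -> 'I_dimN -> R) (p tau : R) (S : tensor m1 m2)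
  : tensor m1 m2 :=
  fun j => \matrix_(r < m1, c < m2)
     if (r : nat) == c then (GST (complex.Re (Lt S j r c)) (tau * W r j) p)%:C else 0.

(* X is (a value of) D_{W,p,tau}(A), for some T-SVD of A *)
Definition gtsvt m1 m2 (W : nat -> 'I_dimN -> R) (p tau : R) (A X : tensor m1 m2)
  : Prop :=
  exists U S V, tsvd A U S V /\
    X = tprod (tprod U (Linv (Shat W p tau S))) (ttr V).

End Tensor.

From HB Require Import structures.
From mathcomp Require Import all_boot all_order all_algebra.
From mathcomp Require Import complex.
From mathcomp Require Import boolp classical_sets reals exp.
From mathcomp Require Import zify.
Set Implicit Arguments.
Unset Strict Implicit.
Unset Printing Implicit Defensive.
Import Order.TTheory GRing.Theory Num.Theory Num.Def.

(** The transform L is invertible and turns t-products, transposes and the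
identity tensor into slicewise matrix operations, so the GTSVT is computed
slice by slice, as a thresholded SVD of each frontal slice of L(A).  In a slice
Q has orthonormal columns and A = Q B.  Given an SVD U S V^H of Q B, the
columns of Q^H U facing nonzero singular values are orthonormal; completing
them to a unitary U' gives an SVD U' S' V^H of B with the same V and singular
values, and Q U' agrees with U on those columns.  Conversely, completing the
columns of Q U' to a unitary U turns an SVD of B into one of Q B.  Since
GST(0) = 0, thresholding the diagonal only involves those columns, hence
U GST(S) V^H = Q U' GST(S') V^H. *)

Section Digits.
Variable ns : seq nat.
Hypothesis ns_gt0 : all (fun n => 0 < n)%N ns.

Lemma radix_gt0 b : (0 < nth 1 ns b)%N.
Proof.
case: (ltnP b (size ns)) => hb; first by apply: (allP ns_gt0); exact: mem_nth.
by rewrite nth_default.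
Qed.

Lemma stride0 : stride ns 0 = 1%N.
Proof. by rewrite /stride big_ord0. Qed.

Lemma strideS a : stride ns a.+1 = (stride ns a * nth 1 ns a)%N.
Proof. by rewrite /stride big_ord_recr. Qed.

Lemma stride_gt0 a : (0 < stride ns a)%N.
Proof.
by elim: a => [|a IH]; rewrite ?stride0 // strideS muln_gt0 IH radix_gt0.
Qed.

Lemma dvdn_stride a b : (a <= b)%N -> (stride ns a %| stride ns b)%N.
Proof.
elim: b => [|b IH]; first by rewrite leqn0 => /eqP ->.
rewrite leq_eqVlt => /orP [/eqP -> //|]; rewrite ltnS => /IH ab.
by rewrite strideS dvdn_mulr.
Qed.

Lemma digit_modn j a : digit ns j a = (j %% stride ns a.+1 %/ stride ns a)%N.
Proof. by rewrite /digit modn_divl strideS mulnC. Qed.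

Lemma ltn_digit j a : (digit ns j a < nth 1 ns a)%N.
Proof. by rewrite /digit ltn_pmod ?radix_gt0. Qed.

Lemma modn_strideS x a :
  (x %% stride ns a.+1 = digit ns x a * stride ns a + x %% stride ns a)%N.
Proof.
rewrite digit_modn {1}(divn_eq (x %% stride ns a.+1) (stride ns a)).
by rewrite (@modn_dvdm (stride ns a.+1) x (stride ns a)) // dvdn_stride.
Qed.

Lemma digit_inj x y : (x < dimN ns)%N -> (y < dimN ns)%N ->
  (forall b : 'I_(size ns), digit ns x b = digit ns y b) -> x = y.
Proof.
move=> x_lt y_lt xy.
have xy_mod m : (m <= size ns)%N -> (x %% stride ns m = y %% stride ns m)%N.
  elim: m => [|m IH] m_le; first by rewrite stride0 !modn1.
  by rewrite !modn_strideS IH ?(ltnW m_le) // (xy (Ordinal m_le)).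
by have := xy_mod _ (leqnn _); rewrite !modn_small.
Qed.

Section SetDigit.
Variable a : nat.

Definition setdigit (j t : nat) : nat :=
  (j %/ stride ns a.+1 * stride ns a.+1 + t * stride ns a + j %% stride ns a)%N.

Lemma setdigitE j t : setdigit j t =
  ((j %/ stride ns a.+1 * nth 1 ns a + t) * stride ns a + j %% stride ns a)%N.
Proof. rewrite /setdigit strideS; nia. Qed.

Lemma ltn_stride_add t x : (t < nth 1 ns a)%N -> (x < stride ns a)%N ->
  (t * stride ns a + x < stride ns a.+1)%N.
Proof.
move=> t_lt x_lt; rewrite strideS.
have : (t.+1 * stride ns a <= nth 1 ns a * stride ns a)%N by rewrite leq_mul2r t_lt orbT.
nia.
Qed.

Lemma digit_setdigit j t : (t < nth 1 ns a)%N -> digit ns (setdigit j t) a = t.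
Proof.
move=> t_lt; rewrite /digit setdigitE divnMDl ?stride_gt0 //.
rewrite (divn_small (ltn_pmod _ (stride_gt0 a))) addn0.
by rewrite modnMDl modn_small.
Qed.

Lemma digit_setdigit_neq j t b : (t < nth 1 ns a)%N -> b != a ->
  digit ns (setdigit j t) b = digit ns j b.
Proof.
move=> t_lt; rewrite neq_ltn => /orP [ba|ab].
  rewrite !digit_modn; congr (_ %/ _)%N.
  rewrite -(@modn_dvdm (stride ns a) j _ (dvdn_stride ba)).
  rewrite -(@modn_dvdm (stride ns a) (setdigit j t) _ (dvdn_stride ba)).
  by rewrite setdigitE modnMDl modn_mod.
rewrite /digit -(divnK (dvdn_stride ab)) mulnC !divnMA; congr ((_ %/ _) %% _)%N.
rewrite /setdigit -addnA divnMDl ?stride_gt0 //.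
by rewrite (divn_small (ltn_stride_add t_lt (ltn_pmod j (stride_gt0 a)))) addn0.
Qed.

Lemma setdigit_lt j t : (a < size ns)%N -> (j < dimN ns)%N -> (t < nth 1 ns a)%N ->
  (setdigit j t < dimN ns)%N.
Proof.
move=> a_lt j_lt t_lt.
have sN : (stride ns a.+1 %| dimN ns)%N by apply: dvdn_stride.
have q_lt : (j %/ stride ns a.+1 < dimN ns %/ stride ns a.+1)%N.
  by rewrite ltn_divLR ?stride_gt0 // divnK.
have := ltn_stride_add t_lt (ltn_pmod j (stride_gt0 a)).
rewrite /setdigit -addnA -(divnK sN).
set q := (j %/ _)%N; set N := (dimN ns %/ _)%N; set s := stride ns a.+1.
have : (q.+1 * s <= N * s)%N by rewrite leq_mul2r q_lt orbT.
nia.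
Qed.
End SetDigit.
End Digits.

Local Open Scope ring_scope.

Section MatrixEntries.
Variable R : realType.
Local Notation C := R[i].

Lemma mxeE m n (M : 'M[C]_(m, n)) (r : 'I_m) (c : 'I_n) : mxe M r c = M r c.
Proof.
rewrite /mxe; case: insubP => [r' _ /val_inj ->|]; last by rewrite ltn_ord.
by case: insubP => [c' _ /val_inj ->|] //; rewrite ltn_ord.
Qed.

Lemma mxe_ord m n (M : 'M[C]_(m, n)) r c (r_lt : (r < m)%N) (c_lt : (c < n)%N) :
  mxe M r c = M (Ordinal r_lt) (Ordinal c_lt).
Proof. exact: (mxeE M (Ordinal r_lt) (Ordinal c_lt)). Qed.

Lemma mxe_out m n (M : 'M[C]_(m, n)) r c : ((m <= r) || (n <= c))%N -> mxe M r c = 0.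
Proof.
rewrite /mxe; case: insubP => [r' r_lt _|//]; case: insubP => [c' c_lt _|//].
by rewrite leqNgt r_lt leqNgt c_lt.
Qed.

Lemma mxe_diag_out m n (M : 'M[C]_(m, n)) c : (minn m n <= c)%N -> mxe M c c = 0.
Proof. by move=> c_ge; rewrite mxe_out // -geq_min. Qed.
End MatrixEntries.

Section ModeProduct.
Variable R : realType.
Local Notation C := R[i].
Variable ns : seq nat.
Hypothesis ns_gt0 : all (fun n => 0 < n)%N ns.
Variable a : 'I_(size ns).

Definition digit_ord (j : 'I_(dimN ns)) : 'I_(nth 1 ns a) :=
  Ordinal (ltn_digit ns_gt0 j a).

Definition setdigit_ord (j : 'I_(dimN ns)) (t : 'I_(nth 1 ns a)) : 'I_(dimN ns) :=
  Ordinal (setdigit_lt ns_gt0 (ltn_ord a) (ltn_ord j) (ltn_ord t)).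

Lemma digit_setdigit_ord j t : digit ns (setdigit_ord j t) a = t.
Proof. exact: digit_setdigit. Qed.

Lemma digit_ord_setdigit j t : digit_ord (setdigit_ord j t) = t.
Proof. exact/val_inj/digit_setdigit_ord. Qed.

Lemma digit_setdigit_ord_neq j t (b : 'I_(size ns)) : b != a ->
  digit ns (setdigit_ord j t) b = digit ns j b.
Proof. exact: digit_setdigit_neq. Qed.

Lemma eq_setdigit_ord (j j' : 'I_(dimN ns)) :
  (forall b : 'I_(size ns), b != a -> digit ns j' b = digit ns j b) ->
  j' = setdigit_ord j (digit_ord j').
Proof.
move=> jj'; apply/val_inj/digit_inj => //; try exact: ltn_ord.
move=> b; have [->|ba] := eqVneq b a; first by rewrite digit_setdigit_ord.
by rewrite digit_setdigit_ord_neq // jj'.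
Qed.

Lemma setdigit_ord2 j t t' : setdigit_ord (setdigit_ord j t) t' = setdigit_ord j t'.
Proof.
rewrite [LHS](@eq_setdigit_ord j) ?digit_ord_setdigit // => b ba.
by rewrite !digit_setdigit_ord_neq.
Qed.

Lemma setdigit_ord_id j : setdigit_ord j (digit_ord j) = j.
Proof. by rewrite -eq_setdigit_ord. Qed.

Lemma sum_mode_fiber (V : zmodType) (F : 'I_(dimN ns) -> V) (j : 'I_(dimN ns)) :
  \sum_(j' : 'I_(dimN ns) |
        [forall b : 'I_(size ns), (b != a) ==> (digit ns j' b == digit ns j b)]) F j'
  = \sum_(t < nth 1 ns a) F (setdigit_ord j t).
Proof.
rewrite (partition_big digit_ord xpredT) //=; apply: eq_bigr => t _.
rewrite (big_pred1 (setdigit_ord j t)) // => j'; apply/idP/idP.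
  move=> /andP [/forallP jj' /eqP <-]; apply/eqP/eq_setdigit_ord => b ba.
  by apply/eqP; move: (jj' b); rewrite ba.
move=> /eqP ->; rewrite digit_ord_setdigit eqxx andbT.
by apply/forallP => b; apply/implyP => ba; rewrite digit_setdigit_ord_neq.
Qed.

Lemma modeprodE m1 m2 (M : 'M[C]_(nth 1 ns a)) (T : tensor R ns m1 m2) j :
  modeprod M T j = \sum_(t < nth 1 ns a) M (digit_ord j) t *: T (setdigit_ord j t).
Proof.
rewrite /modeprod sum_mode_fiber; apply: eq_bigr => t _.
by rewrite digit_setdigit_ord -[digit ns j a]/(nat_of_ord (digit_ord j)) mxeE.
Qed.

Lemma modeprodM m1 m2 (M N : 'M[C]_(nth 1 ns a)) (T : tensor R ns m1 m2) :
  modeprod M (modeprod N T) = modeprod (M *m N) T.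
Proof.
apply: funext => j; rewrite !modeprodE.
under eq_bigr => t _ do rewrite modeprodE digit_ord_setdigit scaler_sumr.
rewrite exchange_big /=; apply: eq_bigr => t' _.
rewrite mxE scaler_suml; apply: eq_bigr => t _.
by rewrite setdigit_ord2 scalerA.
Qed.

Lemma modeprod1 m1 m2 (T : tensor R ns m1 m2) : modeprod (1%:M : 'M[C]_(nth 1 ns a)) T = T.
Proof.
apply: funext => j; rewrite modeprodE (bigD1 (digit_ord j)) //= big1 ?addr0.
  by rewrite mxE eqxx scale1r setdigit_ord_id.
by move=> t /negPf tj; rewrite mxE eq_sym tj scale0r.
Qed.

Lemma modeprod_mxE m1 m2 (M : 'M[C]_(nth 1 ns a)) (T : tensor R ns m1 m2) j r c :
  modeprod M T j r c = \sum_(t < nth 1 ns a) M (digit_ord j) t * T (setdigit_ord j t) r c.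
Proof. by rewrite modeprodE summxE; apply: eq_bigr => t _; rewrite mxE. Qed.
End ModeProduct.

Lemma foldr_foldl_cancel (X I : Type) (f g : I -> X -> X) (s : seq I) (x : X) :
  (forall a, cancel (f a) (g a)) ->
  foldr (fun a y => g a y) (foldl (fun y a => f a y) x s) s = x.
Proof. by move=> fK; elim: s x => [//|a s IH] x /=; rewrite IH fK. Qed.

Lemma foldl_foldr_cancel (X I : Type) (f g : I -> X -> X) (s : seq I) (x : X) :
  (forall a, cancel (g a) (f a)) ->
  foldl (fun y a => f a y) (foldr (fun a y => g a y) x s) s = x.
Proof. by move=> gK; elim: s x => [//|a s IH] x /=; rewrite gK IH. Qed.

Section Unitary.
Variable R : realType.
Local Notation C := R[i].
Local Open Scope sesquilinear_scope.
Local Notation "B ^!" :=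
  (orthomx conjC (mx_of_hermitian (hermitian1mx _)) B) : matrix_set_scope.

Lemma mxH_trmxC m n (M : 'M[C]_(m, n)) : mxH M = M ^t*.
Proof. by rewrite /mxH map_trmx. Qed.

Lemma mxHE m n (M : 'M[C]_(m, n)) i j : mxH M i j = (M j i)^*.
Proof. by rewrite /mxH !mxE. Qed.

Lemma mxHM m n p (A : 'M[C]_(m, n)) (B : 'M[C]_(n, p)) :
  mxH (A *m B) = mxH B *m mxH A.
Proof. by rewrite !mxH_trmxC trmx_mul map_mxM. Qed.

Lemma mxH_mulmx_unitary n (U : 'M[C]_n) : U \is unitarymx -> mxH U *m U = 1%:M.
Proof. by rewrite mxH_trmxC => /unitarymxP /mulmx1C. Qed.

Lemma mulmx_mxH_unitary n (U : 'M[C]_n) : U \is unitarymx -> U *m mxH U = 1%:M.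
Proof. by rewrite mxH_trmxC => /unitarymxP. Qed.

Lemma unitmx_scalar_mxH n (M : 'M[C]_n) (a : C) :
  a != 0 -> M *m mxH M = a%:M -> M \in unitmx.
Proof.
move=> a_neq0 MM; have : M *m (a^-1 *: mxH M) = 1%:M.
  by rewrite -scalemxAr MM scale_scalar_mx mulVf.
by case/mulmx1_unit.
Qed.

Lemma unitarymx_rows_le r n (M : 'M[C]_(r, n)) : M \is unitarymx -> (r <= n)%N.
Proof. by move=> /mxrank_unitary <-; exact: rank_leq_col. Qed.

(* The Gram-Schmidt basis of the orthogonal complement of the rows of M
   completes M to a unitary matrix. *)
Lemma unitary_completion r n (M : 'M[C]_(r, n)) : M \is unitarymx ->
  exists2 E : 'M[C]_n, E \is unitarymx &
    forall i l : 'I_n, (i < r)%N -> E i l = mxe M i l.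
Proof.
move=> uM; set S := schmidt (row_base (M^!)%MS).
have uS : S \is unitarymx by apply: schmidt_unitarymx; exact: rank_leq_col.
have S_ortho : (S <= M^!)%MS.
  by rewrite /S (eqmx_schmidt_free (row_base_free _)) eq_row_base.
have MS : M *m S ^t* = 0 by apply/orthomx1P; rewrite orthomx_sym.
have SM : S *m M ^t* = 0 by apply/orthomx1P.
have uMS : col_mx M S \is unitarymx.
  apply/unitarymxP; rewrite tr_col_mx map_row_mx mul_col_row.
  by rewrite (unitarymxP uM) (unitarymxP uS) MS SM -scalar_mx_block.
have rk : (r + \rank (M^!)%MS)%N = n by rewrite -{1}(mxrank_unitary uM) add_rank_ortho.
have cast_unitary m' (e : (r + \rank (M^!)%MS)%N = m') :
    castmx (e, erefl n) (col_mx M S) \is unitarymx.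
  by case: m' / e; rewrite castmx_id.
exists (castmx (rk, erefl n) (col_mx M S)); first exact: cast_unitary.
move=> i l i_lt; rewrite castmxE /=.
have -> : cast_ord (esym rk) i = lshift _ (Ordinal i_lt) by apply: val_inj.
by rewrite col_mxEu -[nat_of_ord i]/(nat_of_ord (Ordinal i_lt)) mxeE cast_ord_id.
Qed.

Lemma unitary_completion_cols n m (G : 'M[C]_(n, m)) r : (r <= m)%N ->
  (forall i j : 'I_m, (i < r)%N -> (j < r)%N -> (mxH G *m G) i j = (i == j)%:R) ->
  (r <= n)%N /\ exists2 U : 'M[C]_n, U \is unitarymx &
    forall (l : 'I_n) c, (c < r)%N -> mxe U l c = mxe G l c.
Proof.
move=> r_le G_orth; set M := \matrix_(i < r, l < n) (mxe G l i)^*.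
have uM : M \is unitarymx.
  apply/unitarymxP/matrixP => i j; rewrite -mxH_trmxC.
  have := G_orth (widen_ord r_le i) (widen_ord r_le j) (ltn_ord i) (ltn_ord j).
  rewrite !mxE => <-; apply: eq_bigr => l _.
  by rewrite !mxHE !mxE conjCK -!mxeE.
have r_n := unitarymx_rows_le uM; split => //.
have [E uE EM] := unitary_completion uM.
exists (mxH E); first by rewrite mxH_trmxC trmxC_unitary.
move=> l c c_lt; have c_n := leq_trans c_lt r_n.
rewrite -[c]/(nat_of_ord (Ordinal c_n)) mxeE mxHE EM //=.
by rewrite -[c]/(nat_of_ord (Ordinal c_lt)) mxeE mxE conjCK.
Qed.
End Unitary.

Section DiagonalMatrices.
Variable R : realType.
Local Notation C := R[i].

Lemma mxe_diag m1 m2 (S : 'M[C]_(m1, m2)) r c : is_diag_mx S -> r != c -> mxe S r c = 0.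
Proof.
move=> /is_diag_mxP dS rc.
case: (ltnP r m1) => r_lt; last by rewrite mxe_out ?r_lt.
case: (ltnP c m2) => c_lt; last by rewrite mxe_out ?c_lt ?orbT.
by rewrite (mxe_ord _ r_lt c_lt) dS.
Qed.

Lemma mulmx_diagE p m1 m2 (X : 'M[C]_(p, m1)) (S : 'M[C]_(m1, m2)) :
  is_diag_mx S -> forall (l : 'I_p) (c : 'I_m2), (X *m S) l c = mxe X l c * mxe S c c.
Proof.
move=> /is_diag_mxP dS l c; rewrite mxE; case: (ltnP c m1) => c_lt.
  rewrite (bigD1 (Ordinal c_lt)) //= big1 ?addr0 => [|k kc]; first by rewrite -!mxeE.
  by rewrite dS ?mulr0 //; apply: contra kc => /eqP kc; apply/eqP/val_inj.
rewrite (mxe_out X (r := l)) ?c_lt ?orbT // mul0r big1 // => k _.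
by rewrite dS ?mulr0 // neq_ltn (leq_trans (ltn_ord k) c_lt).
Qed.

Lemma mulmx_diag_eq p m1 m1' m2 (X1 : 'M[C]_(p, m1)) (X2 : 'M[C]_(p, m1'))
    (S1 : 'M[C]_(m1, m2)) (S2 : 'M[C]_(m1', m2)) :
  is_diag_mx S1 -> is_diag_mx S2 -> (forall c, mxe S1 c c = mxe S2 c c) ->
  (forall (l : 'I_p) c, mxe S1 c c != 0 -> mxe X1 l c = mxe X2 l c) ->
  X1 *m S1 = X2 *m S2.
Proof.
move=> dS1 dS2 S12 X12; apply/matrixP => l c; rewrite !mulmx_diagE // -S12.
by have [->|/X12 ->] := eqVneq (mxe S1 c c) 0; rewrite ?mulr0.
Qed.

Lemma mulmx_diag_cancel p m1 m2 (X1 X2 : 'M[C]_(p, m1)) (S : 'M[C]_(m1, m2)) :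
  is_diag_mx S -> X1 *m S = X2 *m S ->
  forall (l : 'I_p) c, mxe S c c != 0 -> mxe X1 l c = mxe X2 l c.
Proof.
move=> dS X12 l c Sc; have c_lt : (c < m2)%N.
  by rewrite ltnNge; apply: contra Sc => c_ge; rewrite mxe_out // c_ge orbT.
have := congr1 (fun M : 'M[C]_(p, m2) => M l (Ordinal c_lt)) X12.
by rewrite /= !mulmx_diagE //; apply: mulIf.
Qed.

Definition resize_mx m1 m2 m1' m2' (S : 'M[C]_(m1, m2)) : 'M[C]_(m1', m2') :=
  \matrix_(i, j) mxe S i j.

Lemma is_diag_resize m1 m2 m1' m2' (S : 'M[C]_(m1, m2)) :
  is_diag_mx S -> is_diag_mx (resize_mx m1' m2' S).
Proof. by move=> dS; apply/is_diag_mxP => i j ij; rewrite mxE mxe_diag. Qed.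

Lemma mxe_resize_diag m1 m2 m1' (S : 'M[C]_(m1, m2)) c :
  (forall c', (m1' <= c')%N -> mxe S c' c' = 0) -> mxe (resize_mx m1' m2 S) c c = mxe S c c.
Proof.
move=> S0; case: (ltnP c m1') => c_lt1; last by rewrite mxe_out ?c_lt1 ?S0.
case: (ltnP c m2) => c_lt2; last by rewrite !mxe_out ?c_lt2 ?orbT.
by rewrite (mxe_ord _ c_lt1 c_lt2) mxE.
Qed.

Section MapDiag.
Variable h : nat -> C -> C.
Hypothesis h0 : forall c, h c 0 = 0.

Definition map_diag m1 m2 (S : 'M[C]_(m1, m2)) : 'M[C]_(m1, m2) :=
  \matrix_(r, c) if (r : nat) == c then h r (S r c) else 0.

Lemma is_diag_map_diag m1 m2 (S : 'M[C]_(m1, m2)) : is_diag_mx (map_diag S).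
Proof. by apply/is_diag_mxP => r c rc; rewrite mxE (negbTE rc). Qed.

Lemma mxe_map_diag m1 m2 (S : 'M[C]_(m1, m2)) c :
  mxe (map_diag S) c c = h c (mxe S c c).
Proof.
case: (ltnP c m1) => c_lt1; last by rewrite !mxe_out ?c_lt1 ?h0.
case: (ltnP c m2) => c_lt2; last by rewrite !mxe_out ?c_lt2 ?orbT ?h0.
by rewrite !(mxe_ord _ c_lt1 c_lt2) mxE eqxx.
Qed.

Lemma mulmx_map_diag_eq p m1 m1' m2 (X1 : 'M[C]_(p, m1)) (X2 : 'M[C]_(p, m1'))
    (S1 : 'M[C]_(m1, m2)) (S2 : 'M[C]_(m1', m2)) :
  (forall c, mxe S1 c c = mxe S2 c c) ->
  (forall (l : 'I_p) c, mxe S1 c c != 0 -> mxe X1 l c = mxe X2 l c) ->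
  X1 *m map_diag S1 = X2 *m map_diag S2.
Proof.
move=> S12 X12; apply: mulmx_diag_eq; try exact: is_diag_map_diag.
  by move=> c; rewrite !mxe_map_diag S12.
move=> l c; rewrite mxe_map_diag => hS; apply: X12.
by apply: contraNneq hS => ->; rewrite h0.
Qed.
End MapDiag.
End DiagonalMatrices.

Section SVD.
Variable R : realType.
Local Notation C := R[i].

Definition sv_sorted m1 m2 (S : 'M[C]_(m1, m2)) : Prop :=
  (forall i, (i < minn m1 m2)%N -> 0 <= mxe S i i) /\
  (forall i i', (i <= i')%N -> (i' < minn m1 m2)%N -> mxe S i' i' <= mxe S i i).

Definition is_svd m1 m2 (A : 'M[C]_(m1, m2)) (U : 'M[C]_m1) (S : 'M[C]_(m1, m2))
    (V : 'M[C]_m2) : Prop :=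
  [/\ U \is unitarymx, V \is unitarymx, is_diag_mx S, A = U *m S *m mxH V & sv_sorted S].

Definition svt_mx (h : nat -> C -> C) m1 m2 (A X : 'M[C]_(m1, m2)) : Prop :=
  exists U S V, is_svd A U S V /\ X = U *m map_diag h S *m mxH V.

Lemma sv_sorted_eq_diag m1 m2 m1' m2' (S : 'M[C]_(m1, m2)) (S' : 'M[C]_(m1', m2')) :
  (forall c, mxe S c c = mxe S' c c) -> sv_sorted S -> sv_sorted S'.
Proof.
move=> SS' [S_ge0 S_sorted].
have S_ge0' i : 0 <= mxe S i i.
  by case: (ltnP i (minn m1 m2)) => i_lt; [exact: S_ge0 | rewrite mxe_diag_out].
split=> [i _ | i i' ii' _]; rewrite -!SS' //.
case: (ltnP i' (minn m1 m2)) => i'_lt; first exact: S_sorted.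
by rewrite mxe_diag_out.
Qed.

Lemma sv_sorted_support m1 m2 (S : 'M[C]_(m1, m2)) : sv_sorted S ->
  exists2 r, (r <= minn m1 m2)%N & forall c, (mxe S c c != 0) = (c < r)%N.
Proof.
move=> [S_ge0 S_sorted].
have S0 : exists c, mxe S c c == 0 by exists (minn m1 m2); rewrite mxe_diag_out.
case: (ex_minnP S0) => r /eqP Sr r_min.
exists r; first by apply: r_min; rewrite mxe_diag_out.
move=> c; apply/idP/idP => [Sc | c_lt].
  rewrite ltnNge; apply: contra Sc => r_le.
  case: (ltnP c (minn m1 m2)) => c_lt; last by rewrite mxe_diag_out.
  by rewrite eq_le S_ge0 // andbT -Sr S_sorted.
by apply: contraTN c_lt => Sc; rewrite -leqNgt r_min.
Qed.

Section Isometry.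
Variable h : nat -> C -> C.
Hypothesis h0 : forall c, h c 0 = 0.
Variables (n1 k n2 : nat) (Q : 'M[C]_(n1, k)).
Hypothesis QQ : mxH Q *m Q = 1%:M.

Lemma svd_isometry_factor (B : 'M[C]_(k, n2)) U S V : is_svd (Q *m B) U S V ->
  exists (U' : 'M[C]_k) (S' : 'M[C]_(k, n2)), is_svd B U' S' V /\
    Q *m (U' *m map_diag h S' *m mxH V) = U *m map_diag h S *m mxH V.
Proof.
move=> [uU uV dS QB_svd S_sorted]; set G := mxH Q *m U.
have US : U *m S = Q *m B *m V.
  by rewrite QB_svd -mulmxA mxH_mulmx_unitary // mulmx1.
have GS : G *m S = B *m V by rewrite /G -mulmxA US !mulmxA QQ mul1mx.
have QG_U : forall (l : 'I_n1) c, mxe S c c != 0 -> mxe (Q *m G) l c = mxe U l c.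
  by apply: mulmx_diag_cancel dS _; rewrite -mulmxA GS mulmxA US.
have [r r_le supp] := sv_sorted_support S_sorted.
have r_n1 : (r <= n1)%N := leq_trans r_le (geq_minl _ _).
have G_orth (i j : 'I_n1) : (i < r)%N -> (j < r)%N -> (mxH G *m G) i j = (i == j)%:R.
  move=> i_lt j_lt; have -> : mxH G *m G = mxH (Q *m G) *m (Q *m G).
    by rewrite mxHM -mulmxA [mxH Q *m _]mulmxA QQ mul1mx.
  transitivity ((mxH U *m U) i j); last by rewrite mxH_mulmx_unitary // mxE.
  rewrite !mxE; apply: eq_bigr => l _; rewrite !mxHE -![(Q *m G) l _]mxeE -![U l _]mxeE.
  by rewrite !QG_U // supp.
have [r_k [U' uU' U'_G]] := unitary_completion_cols r_n1 G_orth.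
set S' := resize_mx k n2 S.
have SS' c : mxe S c c = mxe S' c c.
  rewrite mxe_resize_diag // => c' k_le; apply/eqP.
  by move: (supp c'); rewrite ltnNge (leq_trans r_k k_le) => /negbFE.
have G_U' (l : 'I_k) c : mxe S c c != 0 -> mxe G l c = mxe U' l c.
  by rewrite supp => /U'_G ->.
exists U', S'; split.
  split=> //; [exact: is_diag_resize | | exact: sv_sorted_eq_diag S_sorted].
  have -> : B = G *m S *m mxH V by rewrite GS -mulmxA mulmx_mxH_unitary // mulmx1.
  by rewrite (mulmx_diag_eq dS (is_diag_resize _ _ dS) SS' G_U').
rewrite !mulmxA -(mulmxA Q) -(mulmx_map_diag_eq h0 SS' G_U') mulmxA.
by rewrite (mulmx_map_diag_eq h0 (fun c => erefl) QG_U).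
Qed.

Lemma svd_isometry_lift (B : 'M[C]_(k, n2)) U' S' V : is_svd B U' S' V ->
  exists U S, is_svd (Q *m B) U S V /\
    Q *m (U' *m map_diag h S' *m mxH V) = U *m map_diag h S *m mxH V.
Proof.
move=> [uU' uV dS' B_svd S'_sorted].
have QU'_orth (i j : 'I_k) : (i < k)%N -> (j < k)%N ->
    (mxH (Q *m U') *m (Q *m U')) i j = (i == j)%:R.
  move=> _ _; rewrite mxHM -mulmxA [mxH Q *m _]mulmxA QQ mul1mx.
  by rewrite mxH_mulmx_unitary // mxE.
have [k_n1 [U uU U_QU']] := unitary_completion_cols (leqnn k) QU'_orth.
set S := resize_mx n1 n2 S'.
have S'S c : mxe S' c c = mxe S c c.
  by rewrite mxe_resize_diag // => c' n1_le; rewrite mxe_out // (leq_trans k_n1 n1_le).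
have QU'_U (l : 'I_n1) c : mxe S' c c != 0 -> mxe (Q *m U') l c = mxe U l c.
  move=> S'c; rewrite U_QU' // ltnNge; apply: contra S'c => k_le.
  by rewrite mxe_out ?k_le.
exists U, S; split.
  split=> //; [exact: is_diag_resize | | exact: sv_sorted_eq_diag S'_sorted].
  by rewrite B_svd !mulmxA (mulmx_diag_eq dS' (is_diag_resize _ _ dS') S'S QU'_U).
by rewrite !mulmxA (mulmx_map_diag_eq h0 S'S QU'_U).
Qed.

Lemma svt_mx_isometry (B : 'M[C]_(k, n2)) X :
  svt_mx h (Q *m B) X <-> exists Y, svt_mx h B Y /\ X = Q *m Y.
Proof.
split=> [[U [S [V [QB_svd ->]]]] | [_ [[U' [S' [V [B_svd ->]]]] ->]]].
  have [U' [S' [B_svd <-]]] := svd_isometry_factor QB_svd.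
  by exists (U' *m map_diag h S' *m mxH V); split; first by exists U', S', V.
have [U [S [QB_svd ->]]] := svd_isometry_lift B_svd.
by exists U, S, V.
Qed.
End Isometry.
End SVD.


Lemma GST0 (R : realType) (w p : R) : GST 0 w p = 0.
Proof. by rewrite /GST; case: ifP => // _; case: ifP => // _; rewrite sgr0 mul0r. Qed.

Section Transform.
Variable R : realType.
Local Notation C := R[i].
Local Open Scope complex_scope.
Variable ns : seq nat.
Hypothesis ns_gt0 : all (fun n => 0 < n)%N ns.
Variable Us : forall a : 'I_(size ns), 'M[C]_(nth 1 ns a).
Hypothesis Us_unit : forall a, Us a \in unitmx.

Lemma Linv_Lt m1 m2 (T : tensor R ns m1 m2) : Linv Us (Lt Us T) = T.
Proof.
rewrite /Linv /Lt foldl_rev; apply: foldr_foldl_cancel => b x.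
by rewrite (modeprodM ns_gt0) mulVmx ?Us_unit // modeprod1.
Qed.

Lemma Lt_Linv m1 m2 (T : tensor R ns m1 m2) : Lt Us (Linv Us T) = T.
Proof.
rewrite /Linv /Lt foldl_rev; apply: foldl_foldr_cancel => b x.
by rewrite (modeprodM ns_gt0) mulmxV ?Us_unit // modeprod1.
Qed.

Lemma Lt_inj m1 m2 (A B : tensor R ns m1 m2) :
  (forall j, Lt Us A j = Lt Us B j) -> A = B.
Proof. by move=> AB; rewrite -(Linv_Lt A) -(Linv_Lt B); congr Linv; apply: funext. Qed.

Lemma fdiag_Linv m1 m2 (T : tensor R ns m1 m2) : fdiag T -> fdiag (Linv Us T).
Proof.
rewrite /Linv; elim: (rev _) T => [//|b s IH] T dT /=; apply: IH.
move=> j r c rc; rewrite (modeprod_mxE ns_gt0) big1 // => t _.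
by rewrite dT // mulr0.
Qed.

Lemma Lt_tprod m1 m2 m3 (A : tensor R ns m1 m2) (B : tensor R ns m2 m3) j :
  Lt Us (tprod Us A B) j = Lt Us A j *m Lt Us B j.
Proof. by rewrite /tprod Lt_Linv. Qed.

Lemma Lt_ttr m1 m2 (A : tensor R ns m1 m2) j : Lt Us (ttr Us A) j = mxH (Lt Us A j).
Proof. by rewrite /ttr Lt_Linv. Qed.

Lemma Lt_tid m j : Lt Us (tid Us m) j = 1%:M.
Proof. by rewrite /tid Lt_Linv. Qed.

Lemma part_orth_slices m1 m2 (Q : tensor R ns m1 m2) :
  part_orth Us Q <-> forall j, mxH (Lt Us Q j) *m Lt Us Q j = 1%:M.
Proof.
split=> [QQ j | QQ]; first by rewrite -Lt_ttr -Lt_tprod QQ Lt_tid.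
by apply: Lt_inj => j; rewrite Lt_tprod Lt_ttr Lt_tid QQ.
Qed.

Lemma orth_slices m (U : tensor R ns m m) :
  orth Us U <-> forall j, Lt Us U j \is unitarymx.
Proof.
split=> [[_ UU] j | uU].
  by apply/unitarymxP; rewrite -mxH_trmxC -Lt_ttr -Lt_tprod UU Lt_tid.
split; first by apply/part_orth_slices => j; exact: mxH_mulmx_unitary.
by apply: Lt_inj => j; rewrite Lt_tprod Lt_ttr Lt_tid mulmx_mxH_unitary.
Qed.

Lemma tsvd_slices m1 m2 (A : tensor R ns m1 m2) U S V :
  tsvd Us A U S V <-> forall j, is_svd (Lt Us A j) (Lt Us U j) (Lt Us S j) (Lt Us V j).
Proof.
split=> [[/orth_slices uU [/orth_slices uV [_ [dS [-> [S_ge0 S_sorted]]]]]] j | svdA].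
  split=> //.
  - by apply/is_diag_mxP => r c; apply: dS.
  - by rewrite !Lt_tprod Lt_ttr.
  - by split; [apply: S_ge0 | apply: S_sorted].
have dS : fdiag (Lt Us S).
  by move=> j r c; have [_ _ /is_diag_mxP dSj _ _] := svdA j; apply: dSj.
split; first by apply/orth_slices => j; have [] := svdA j.
split; first by apply/orth_slices => j; have [] := svdA j.
split; first by rewrite -(Linv_Lt S); apply: fdiag_Linv.
split=> //; split.
  by apply: Lt_inj => j; rewrite !Lt_tprod Lt_ttr; have [] := svdA j.
by split=> j; have [_ _ _ _ []] := svdA j.
Qed.

Variables (W : nat -> 'I_(dimN ns) -> R) (p tau : R).

(* [Shat W p tau S j] is [map_diag (gst_diag j) (Lt Us S j)] by conversion. *)
Definition gst_diag (j : 'I_(dimN ns)) : nat -> C -> C :=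
  fun r x => (GST (complex.Re x) (tau * W r j) p)%:C.

Lemma gst_diag0 j r : gst_diag j r 0 = 0.
Proof. by rewrite /gst_diag GST0. Qed.

Lemma gtsvt_slices m1 m2 (A X : tensor R ns m1 m2) :
  gtsvt Us W p tau A X <-> forall j, svt_mx (gst_diag j) (Lt Us A j) (Lt Us X j).
Proof.
split=> [[U [S [V [/tsvd_slices svdA ->]]]] j | svtA].
  exists (Lt Us U j), (Lt Us S j), (Lt Us V j); split; first exact: svdA.
  by rewrite !Lt_tprod Lt_ttr Lt_Linv.
have /choice [USV svdA] : forall j, exists USV : 'M[C]_m1 * 'M[C]_(m1, m2) * 'M[C]_m2,
    is_svd (Lt Us A j) USV.1.1 USV.1.2 USV.2 /\
    Lt Us X j = USV.1.1 *m map_diag (gst_diag j) USV.1.2 *m mxH USV.2.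
  by move=> j; have [U [S [V svdAj]]] := svtA j; exists (U, S, V).
exists (Linv Us (fun j => (USV j).1.1)), (Linv Us (fun j => (USV j).1.2)),
  (Linv Us (fun j => (USV j).2)); split.
  by apply/tsvd_slices => j; rewrite !Lt_Linv; exact: (svdA j).1.
apply: Lt_inj => j; rewrite !Lt_tprod Lt_ttr /Shat !Lt_Linv.
exact: (svdA j).2.
Qed.

Lemma gtsvt_isometry_tprod n1 k n2 (Q : tensor R ns n1 k) (B : tensor R ns k n2) X :
  part_orth Us Q ->
  gtsvt Us W p tau (tprod Us Q B) X <->
  exists Y, gtsvt Us W p tau B Y /\ X = tprod Us Q Y.
Proof.
move=> /part_orth_slices QQ; rewrite gtsvt_slices.
split=> [svtQB | [Y [/gtsvt_slices svtB ->]] j].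
  have /choice [Y svtB] : forall j,
      exists Y, svt_mx (gst_diag j) (Lt Us B j) Y /\ Lt Us X j = Lt Us Q j *m Y.
    move=> j; apply/(svt_mx_isometry (gst_diag0 j) (QQ j)).
    by rewrite -Lt_tprod; exact: svtQB.
  exists (Linv Us Y); split.
    by apply/gtsvt_slices => j; rewrite Lt_Linv; exact: (svtB j).1.
  by apply: Lt_inj => j; rewrite Lt_tprod Lt_Linv; exact: (svtB j).2.
rewrite !Lt_tprod; apply/(svt_mx_isometry (gst_diag0 j) (QQ j)).
by exists (Lt Us Y j).
Qed.
End Transform.

Local Open Scope complex_scope.

Theorem proposition1 (R : realType) (ns : seq nat)
  (Us : forall a : 'I_(size ns), 'M[R[i]]_(nth 1 ns a))
  (alpha : 'I_(size ns) -> R)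
  (n1 n2 k : nat) (tau p : R) (W : nat -> 'I_(dimN ns) -> R)
  (Q : tensor R ns n1 k) (B : tensor R ns k n2) :
  (1 <= size ns)%N ->
  all (fun n => 0 < n)%N ns -> (0 < n1)%N -> (0 < n2)%N -> (0 < k)%N ->
  (forall a, 0 < alpha a /\
     Us a *m mxH (Us a) = ((alpha a)%:C)%:M /\
     mxH (Us a) *m Us a = ((alpha a)%:C)%:M) ->
  0 < tau -> 0 < p -> p < 1 ->
  (forall i j, 0 <= W i j) ->
  real_tensor Q -> real_tensor B -> real_tensor (tprod Us Q B) ->
  part_orth Us Q ->
  forall X : tensor R ns n1 n2,
    gtsvt Us W p tau (tprod Us Q B) X <->
    exists Y : tensor R ns k n2, gtsvt Us W p tau B Y /\ X = tprod Us Q Y.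
Proof.
move=> _ ns_gt0 _ _ _ Us_scalar _ _ _ _ _ _ _ Q_orth X.
have Us_unit a : Us a \in unitmx.
  have [alpha_gt0 [UUH _]] := Us_scalar a.
  by apply: unitmx_scalar_mxH UUH; rewrite fmorph_eq0 gt_eqF.
exact: gtsvt_isometry_tprod.
Qed.
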